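(* Let $k>4$ be an odd integer. Then for each $l\in\{2k-2,\,2k-4\}$ there exist permutations $g_1,g_2\in S(l)$ such that each of $g_1,g_2$ has only cycles of length $k$ or $1$, and $g_1g_2^{-1}$ has only cycles of even length.
   Context: $S(l)$ denotes the symmetric group on $\{1,\dots,l\}$. *)

From mathcomp Require Import all_boot all_fingroup.
Set Implicit Arguments. Unset Strict Implicit. Unset Printing Implicit Defensive.

Definition cycles_k_or_1 (l k : nat) (g : 'S_l) : Prop :=
  forall x : 'I_l, #|porbit g x| = k \/ #|porbit g x| = 1%N.

Definition cycles_even (l : nat) (g : 'S_l) : Prop :=
  forall x : 'I_l, ~~ odd #|porbit g x|.

From mathcomp Require Import all_boot all_fingroup.
From mathcomp Require Import zify.
Set Implicit Arguments. Unset Strict Implicit. Unset Printing Implicit Defensive.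

(* The witnesses are explicit permutations of {0,..,l-1}, given as piecewise
   functions on nat; g1 is always the k-cycle (0 1 .. k-1).  For l = 2k-2 the
   quotient g1 g2^-1 is a product of two (k-1)-cycles (even, as k is odd); for
   l = 2k-4 it is a transposition times a (2k-6)-cycle. *)

Ltac case_lia := simpl; repeat match goal with |- context [if ?c then _ else _] =>
  lazymatch c with context [if _ then _ else _] => fail | _ =>
    let H := fresh "H" in destruct c eqn:H end end; lia.

Lemma exists_perm_of_nat_fun l (f : nat -> nat) :
  {in gtn l, forall x, f x < l} -> {in gtn l &, injective f} ->
  exists p : 'S_l, forall x : 'I_l, val (p x) = f x.
Proof.
move=> f_lt f_inj.
pose fo (x : 'I_l) : 'I_l := Ordinal (f_lt x (ltn_ord x)).
have fo_inj : injective fo.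
  by move=> x y [] E; apply/val_inj/f_inj; rewrite ?inE /=.
by exists (perm fo_inj) => x; rewrite permE.
Qed.

Lemma card_porbit_fixpoint l (g : 'S_l) x : g x = x -> #|porbit g x| = 1.
Proof.
move=> gx; suff -> : porbit g x = [set x] by rewrite cards1.
apply/setP => y; rewrite inE; apply/porbitP/eqP => [[i ->]|->]; last first.
  by exists 0; rewrite expg0 perm1.
elim: i => [|i IH]; first by rewrite expg0 perm1.
by rewrite expgSr permM IH gx.
Qed.

Lemma card_porbit_enum l (g : 'S_l) (e : nat -> nat) m :
  0 < m -> {in gtn m &, injective e} ->
  (forall (y : 'I_l) i, i < m -> y = e i :> nat ->
      val (g y) = e (if i.+1 == m then 0 else i.+1)) ->
  forall (x : 'I_l) i, i < m -> (x : nat) = e i -> #|porbit g x| = m.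
Proof.
move=> m_gt0 e_inj g_step x i i_lt xE.
have iterE j : val ((g ^+ j)%g x) = e ((i + j) %% m).
  elim: j => [|j IH]; first by rewrite expg0 perm1 addn0 modn_small.
  rewrite expgSr permM (g_step _ ((i + j) %% m)) ?ltn_pmod //; congr e.
  have -> : (i + j.+1) %% m = ((i + j) %% m).+1 %% m.
    by rewrite addnS -addn1 -modnDml addn1.
  have := ltn_pmod (i + j) m_gt0; set q := (i + j) %% m => q_lt.
  by case: eqP => [->|q1_neq]; [rewrite modnn | rewrite modn_small //; lia].
have -> : porbit g x = [set (g ^+ val t)%g x | t : 'I_m].
  apply/setP => y; apply/porbitP/imsetP => [[j ->]|[t _ ->]]; last by exists t.
  exists (Ordinal (ltn_pmod j m_gt0)) => //; apply/val_inj.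
  by rewrite !iterE /= modnDmr.
rewrite card_imset ?card_ord // => t1 t2 /(congr1 val); rewrite !iterE.
move/e_inj; rewrite !inE !ltn_pmod // => /(_ isT isT) /eqP.
by rewrite eqn_modDl !modn_small ?ltn_ord // => /eqP/val_inj.
Qed.

Lemma mul_permV_val l (g1 g2 : 'S_l) (f1 f2 : nat -> nat) :
  (forall x : 'I_l, val (g1 x) = f1 x) -> (forall x : 'I_l, val (g2 x) = f2 x) ->
  forall (y : 'I_l) c, c < l -> f2 c = f1 y -> val ((g1 * g2^-1)%g y) = c.
Proof.
move=> g1E g2E y c c_lt E.
have g2c : g2 (Ordinal c_lt) = g1 y by apply/val_inj; rewrite g1E g2E.
by rewrite permM -g2c permK.
Qed.

Definition cycle_prefix (m x : nat) : nat :=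
  if x < m then x.+1 else if x == m then 0 else x.

Lemma exists_cycle_prefix l m : m < l ->
  exists g : 'S_l, forall x : 'I_l, val (g x) = cycle_prefix m x.
Proof.
by move=> m_lt; apply: exists_perm_of_nat_fun => [x|x y]; rewrite !inE /cycle_prefix;
  case_lia.
Qed.

Lemma cycles_cycle_prefix l m (g : 'S_l) :
  (forall x : 'I_l, val (g x) = cycle_prefix m x) -> cycles_k_or_1 m.+1 g.
Proof.
move=> gE x; have x_lt := ltn_ord x.
case: (ltnP m x) => x_gt.
  by right; apply: card_porbit_fixpoint; apply: val_inj; rewrite gE /cycle_prefix;
    case_lia.
left; apply: (@card_porbit_enum _ _ id m.+1 _ _ _ x x) => //.
by move=> y i i_le /= yE; rewrite gE /cycle_prefix yE; case_lia.
Qed.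

Section EvenLength.

Variable n : nat.
Hypotheses (n_gt1 : 1 < n) (n_even : ~~ odd n).

(* The (n+1)-cycle (0 n n+1 .. 2n-1). *)
Definition cycle_even_tail (x : nat) : nat :=
  if x == 0 then n else if (n <= x) && (x < n.*2 - 1) then x.+1
  else if x == n.*2 - 1 then 0 else x.

Lemma exists_cycle_even_tail :
  exists g : 'S_(n.*2), forall x : 'I_(n.*2), val (g x) = cycle_even_tail x.
Proof.
by apply: exists_perm_of_nat_fun => [x|x y]; rewrite !inE /cycle_even_tail; case_lia.
Qed.

Lemma cycles_cycle_even_tail (g : 'S_(n.*2)) :
  (forall x : 'I_(n.*2), val (g x) = cycle_even_tail x) -> cycles_k_or_1 n.+1 g.
Proof.
move=> gE x; have x_lt := ltn_ord x.
case: (boolP ((0 < (x : nat)) && ((x : nat) < n))) => x_mid.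
  by right; apply: card_porbit_fixpoint; apply: val_inj; rewrite gE /cycle_even_tail;
    move: x_mid; case_lia.
left; apply: (@card_porbit_enum _ _ (fun i => if i < n then n + i else 0) n.+1 _ _ _ x
  (if (x : nat) == 0 then n else (x : nat) - n)) => //.
- by move=> i j; rewrite !inE; case_lia.
- by move=> y i i_le /= yE; rewrite gE /cycle_even_tail yE; case_lia.
- by move: x_mid; case_lia.
- by move: x_mid; case_lia.
Qed.

Lemma cycles_even_mulV_even_tail (g1 g2 : 'S_(n.*2)) :
  (forall x : 'I_(n.*2), val (g1 x) = cycle_prefix n x) ->
  (forall x : 'I_(n.*2), val (g2 x) = cycle_even_tail x) ->
  cycles_even (g1 * g2^-1)%g.
Proof.
move=> g1E g2E x; have x_lt := ltn_ord x.
have hE := mul_permV_val g1E g2E.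
case: (ltnP (x : nat) n) => x_n.
  rewrite (@card_porbit_enum _ _ id n _ _ _ x x) //; first lia.
  by move=> y i i_lt /= yE; apply: hE;
    rewrite /cycle_prefix /cycle_even_tail; move: yE; case_lia.
rewrite (@card_porbit_enum _ _ (fun i => if i == 0 then n else n.*2 - i) n _ _ _ x
  (if (x : nat) == n then 0 else n.*2 - (x : nat))) //; first lia.
- by move=> i j; rewrite !inE; case_lia.
- by move=> y i i_lt /= yE; apply: hE;
    rewrite /cycle_prefix /cycle_even_tail; move: yE; case_lia.
- by case_lia.
- by case_lia.
Qed.

Lemma even_length_witnesses : exists g1 g2 : 'S_(n.*2),
  cycles_k_or_1 n.+1 g1 /\ cycles_k_or_1 n.+1 g2 /\ cycles_even (g1 * g2^-1)%g.
Proof.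
have [g1 g1E] := @exists_cycle_prefix (n.*2) n ltac:(lia).
have [g2 g2E] := exists_cycle_even_tail.
exists g1, g2; split; first exact: cycles_cycle_prefix g1E.
by split; [exact: cycles_cycle_even_tail | exact: cycles_even_mulV_even_tail].
Qed.

End EvenLength.

Section ShortLength.

Variable k : nat.
Hypothesis k_gt4 : 4 < k.

(* The k-cycle (k 0 3 2 1 2k-5 2k-6 .. k+1). *)
Definition cycle_short (x : nat) : nat :=
  if x == k then 0 else if x == 0 then 3 else if x == 3 then 2
  else if x == 2 then 1 else if x == 1 then k.*2 - 5
  else if (k < x) && (x < k.*2 - 4) then x.-1 else x.

Lemma exists_cycle_short :
  exists g : 'S_(k.*2 - 4), forall x : 'I_(k.*2 - 4), val (g x) = cycle_short x.
Proof.
by apply: exists_perm_of_nat_fun => [x|x y]; rewrite !inE /cycle_short; case_lia.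
Qed.

Lemma cycles_cycle_short (g : 'S_(k.*2 - 4)) :
  (forall x : 'I_(k.*2 - 4), val (g x) = cycle_short x) -> cycles_k_or_1 k g.
Proof.
move=> gE x; have x_lt := ltn_ord x.
case: (boolP ((4 <= (x : nat)) && ((x : nat) < k))) => x_mid.
  by right; apply: card_porbit_fixpoint; apply: val_inj; rewrite gE /cycle_short;
    move: x_mid; case_lia.
left; apply: (@card_porbit_enum _ _ (fun i => if i == 0 then k else if i == 1 then 0
    else if i == 2 then 3 else if i == 3 then 2 else if i == 4 then 1 else k.*2 - i)
  k _ _ _ x
  (if (x : nat) == k then 0 else if (x : nat) == 0 then 1 else if (x : nat) == 3 then 2
   else if (x : nat) == 2 then 3 else if (x : nat) == 1 then 4 else k.*2 - x)) => //.
- lia.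
- by move=> i j; rewrite !inE; case_lia.
- by move=> y i i_lt /= yE; rewrite gE /cycle_short yE; case_lia.
- by move: x_mid; case_lia.
- by move: x_mid; case_lia.
Qed.

Lemma cycles_even_mulV_short (g1 g2 : 'S_(k.*2 - 4)) :
  (forall x : 'I_(k.*2 - 4), val (g1 x) = cycle_prefix k.-1 x) ->
  (forall x : 'I_(k.*2 - 4), val (g2 x) = cycle_short x) ->
  cycles_even (g1 * g2^-1)%g.
Proof.
move=> g1E g2E x; have x_lt := ltn_ord x.
have hE := mul_permV_val g1E g2E.
case: (boolP (((x : nat) == 0) || ((x : nat) == 2))) => x02.
  rewrite (@card_porbit_enum _ _ (fun i => if i == 0 then 0 else 2) 2 _ _ _ x
    (if (x : nat) == 0 then 0 else 1)) //.
  - by move=> i j; rewrite !inE; case_lia.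
  - by move=> y i i_lt /= yE; apply: hE;
      rewrite /cycle_prefix /cycle_short; move: yE; case_lia.
  - by case_lia.
  - by move: x02; case_lia.
rewrite (@card_porbit_enum _ _ (fun i => if i == 0 then 1 else i.+2) (k.*2 - 6) _ _ _ x
  (if (x : nat) == 1 then 0 else x - 2)).
- by rewrite (_ : k.*2 - 6 = (k - 3).*2) ?odd_double //; lia.
- lia.
- by move=> i j; rewrite !inE; case_lia.
- by move=> y i i_lt /= yE; apply: hE;
  rewrite /cycle_prefix /cycle_short; move: yE; case_lia.
- by move: x02; case_lia.
- by move: x02; case_lia.
Qed.

Lemma short_length_witnesses : exists g1 g2 : 'S_(k.*2 - 4),
  cycles_k_or_1 k g1 /\ cycles_k_or_1 k g2 /\ cycles_even (g1 * g2^-1)%g.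
Proof.
have [g1 g1E] := @exists_cycle_prefix (k.*2 - 4) k.-1 ltac:(lia).
have [g2 g2E] := exists_cycle_short.
have k_pred : k.-1.+1 = k by lia.
exists g1, g2; split; first by have := cycles_cycle_prefix g1E; rewrite k_pred.
by split; [exact: cycles_cycle_short | exact: cycles_even_mulV_short].
Qed.

End ShortLength.

Theorem mainTheorem10 (k : nat) :
  odd k -> 4 < k ->
  forall l : nat, (l = k.*2 - 2 \/ l = k.*2 - 4) ->
  exists g1 g2 : 'S_l,
    cycles_k_or_1 k g1 /\ cycles_k_or_1 k g2 /\ cycles_even (g1 * g2^-1)%g.
Proof.
move=> k_odd k_gt4 l [->|->]; last exact: short_length_witnesses.
have [n kE] : exists n, k = n.+1 by exists k.-1; lia.
subst k; rewrite (_ : n.+1.*2 - 2 = n.*2); last by lia.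
by apply: even_length_witnesses; [lia | move: k_odd => /=; case: (odd n)].
Qed.
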